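(* Let $A\in\mathbb{C}^{n\times n}$ with $\mathrm{Ind}(A)=k$, let $m\in\mathbb{N}=\{1,2,\dots\}$ and $X\in\mathbb{C}^{n\times n}$. The following are equivalent: (a) $X=A^{\#_m}$; (b) $AX=(A^{\mathrm{cEP}})^mA^mP_{A^m}$ and $\mathcal{R}(X)=\mathcal{R}(A^k)$; (c) $AX=(A^{\mathrm{cEP}})^mA^mP_{A^m}$ and $AX^2=X$.
   Context: For $A\in\mathbb{C}^{n\times n}$: $A^\dagger$ Moore–Penrose inverse, $P_A=AA^\dagger$, $\mathcal{R}(\cdot)$ column space. The index $\mathrm{Ind}(A)$ is the smallest nonnegative integer $k$ with $\mathcal{R}(A^k)=\mathcal{R}(A^{k+1})$ ($A^0=I_n$). The core-EP inverse $A^{\mathrm{cEP}}$ is the unique $X$ with $XAX=X$ and $\mathcal{R}(X)=\mathcal{R}(X^* )=\mathcal{R}(A^k)$. For $m\in\mathbb{N}$, the $m$-weak group inverse is $A^{\mathrm{WG}_m}:=(A^{\mathrm{cEP}})^{m+1}A^m$ and the $m$-weak core inverse is $A^{\#_m}:=A^{\mathrm{WG}_m}P_{A^m}$. *)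

From HB Require Import structures.
From mathcomp Require Import all_boot all_order all_algebra.
Set Implicit Arguments. Unset Strict Implicit. Unset Printing Implicit Defensive.
Import Order.TTheory GRing.Theory Num.Theory.
Local Open Scope ring_scope.

(* Complex matrices: C is an algebraically closed numeric field with
   conjugation (e.g. the complex numbers). *)

Definition ctr (C : numClosedFieldType) m n (A : 'M[C]_(m, n)) : 'M[C]_(n, m) :=
  (map_mx Num.conj A)^T.

(* column space equality R(A) = R(B), via row spaces of the transposes *)
Definition colspace_eq (C : numClosedFieldType) m n p (A : 'M[C]_(m, n)) (B : 'M[C]_(m, p)) : Prop :=
  (A^T == B^T)%MS.

Definition mx_index (C : numClosedFieldType) n (A : 'M[C]_n) (k : nat) : Prop :=
  colspace_eq (A ^+ k) (A ^+ k.+1) /\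
  forall j, (j < k)%N -> ~ colspace_eq (A ^+ j) (A ^+ j.+1).

Definition is_MP (C : numClosedFieldType) n (A X : 'M[C]_n) : Prop :=
  [/\ A *m X *m A = A, X *m A *m X = X,
      ctr (A *m X) = A *m X & ctr (X *m A) = X *m A].

Definition is_coreEP (C : numClosedFieldType) n (A X : 'M[C]_n) : Prop :=
  exists k, mx_index A k /\
   [/\ X *m A *m X = X, colspace_eq X (ctr X) & colspace_eq X (A ^+ k)].

From HB Require Import structures.
From mathcomp Require Import all_boot all_order all_algebra.
Import Order.TTheory GRing.Theory Num.Theory.
Set Implicit Arguments. Unset Strict Implicit.
Local Open Scope ring_scope.

(* On R(A^k) the core-EP inverse Y inverts A: YA and AY both fix R(A^k), so
   A X = V has the unique solution X = Y V inside R(A^k) whenever V maps into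
   R(A^k).  The matrix V = Y^m A^m P_{A^m} is such a right-hand side, and since
   P_{A^m} fixes R(A^m), which contains R(A^k), V is the identity on R(A^k).
   This gives R(YV) = R(A^k) and A (YV)^2 = YV, while A X^2 = X forces
   X = (AX) X = V X into R(A^k). *)

Lemma trmx_submxP (C : numClosedFieldType) m n p (A : 'M[C]_(m, n))
    (B : 'M[C]_(m, p)) :
  (A^T <= B^T)%MS <-> exists M, A = B *m M.
Proof.
split=> [/submxP[D AD] | [M ->]]; last by rewrite trmx_mul submxMl.
by exists D^T; rewrite -[A]trmxK AD trmx_mul trmxK.
Qed.

Lemma colspace_eqP (C : numClosedFieldType) m n p (A : 'M[C]_(m, n))
    (B : 'M[C]_(m, p)) :
  colspace_eq A B <-> (exists M, A = B *m M) /\ (exists N, B = A *m N).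
Proof.
rewrite /colspace_eq; split=> [/andP[/trmx_submxP AB /trmx_submxP BA] //|].
by case=> /trmx_submxP AB /trmx_submxP BA; apply/andP.
Qed.

Section MatrixIndex.

Variables (C : numClosedFieldType) (n : nat) (A : 'M[C]_n).

Lemma mx_index_uniq k k' : mx_index A k -> mx_index A k' -> k = k'.
Proof.
move=> [Ak minK] [Ak' minK']; case: (ltngtP k k') => // [/minK'|/minK] [].
  exact: Ak.
exact: Ak'.
Qed.

Lemma mx_index_stable k : mx_index A k -> exists T, A ^+ k = A ^+ k.+1 * T.
Proof. by case=> /colspace_eqP[[T AkT] _] _; exists T; rewrite -mulmxE. Qed.

Lemma mx_index_pow_factor k m :
  mx_index A k -> exists U, A ^+ k = A ^+ m * U.
Proof.
move=> /mx_index_stable[T AkT]; case: (leqP m k) => [le_mk | lt_km].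
  by exists (A ^+ (k - m)); rewrite -exprD subnKC.
have AkTj j : A ^+ k = A ^+ (k + j) * T ^+ j.
  elim: j => [|j IHj]; first by rewrite addn0 mulr1.
  rewrite IHj exprS mulrA; congr (_ * _).
  by rewrite addnS -addSn (addnC k.+1) (exprD A j) -mulrA -AkT -exprD addnC.
by exists (T ^+ (m - k)); rewrite (AkTj (m - k)%N) subnKC // ltnW.
Qed.

End MatrixIndex.

Section CoreEPInverse.

Variables (C : numClosedFieldType) (n k : nat) (A Y : 'M[C]_n).
Hypotheses (indexA : mx_index A k) (YAY : Y * A * Y = Y)
  (rangeY : colspace_eq Y (A ^+ k)).

Lemma coreEP_mulK : Y * A * A ^+ k = A ^+ k.
Proof.
case/colspace_eqP: rangeY => _ [N ->].
by rewrite !mulmxE mulrA YAY.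
Qed.

Lemma coreEP_mulVK : A * Y * A ^+ k = A ^+ k.
Proof.
have [T AkT] := mx_index_stable indexA.
by rewrite AkT exprS !mulrA -(mulrA _ Y A) -(mulrA A) coreEP_mulK -exprS.
Qed.

Lemma coreEP_expK j : Y ^+ j * A ^+ (j + k) = A ^+ k.
Proof.
elim: j => [|j IHj]; first by rewrite mul1r.
have -> : (j.+1 + k = k.+1 + j)%N by rewrite addSn addnC.
rewrite exprSr exprD exprS !mulrA -(mulrA (Y ^+ j) Y) -(mulrA (Y ^+ j)).
by rewrite coreEP_mulK -mulrA -exprD addnC.
Qed.

Variable V : 'M[C]_n.
Hypotheses (rangeV : exists M, V = A ^+ k * M) (V_Ak : V * A ^+ k = A ^+ k).

Lemma coreEP_solution_unique X :
  (exists M, X = A ^+ k * M) -> A * X = V -> X = Y * V.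
Proof. by move=> [M ->] <-; rewrite mulrA mulrA coreEP_mulK. Qed.

Lemma coreEP_solution_range : exists M, Y * V = A ^+ k * M.
Proof.
case/colspace_eqP: rangeY => [[M0 ->] _].
by exists (M0 * V); rewrite mulmxE mulrA.
Qed.

Lemma coreEP_solution : A * (Y * V) = V.
Proof. by have [M ->] := rangeV; rewrite !mulrA coreEP_mulVK. Qed.

Lemma coreEP_solution_colspace : colspace_eq (Y * V) (A ^+ k).
Proof.
apply/colspace_eqP; split.
  by have [M YV] := coreEP_solution_range; exists M; rewrite mulmxE.
exists (A ^+ k.+1); rewrite mulmxE exprSr !mulrA -(mulrA Y) V_Ak.
by rewrite -mulrA -exprSr exprS mulrA coreEP_mulK.
Qed.

Lemma coreEP_solutionP_colspace X :
  X = Y * V <-> A * X = V /\ colspace_eq X (A ^+ k).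
Proof.
split=> [-> | [AX /colspace_eqP[[M XM] _]]].
  by split; [exact: coreEP_solution | exact: coreEP_solution_colspace].
by apply: coreEP_solution_unique AX; exists M; rewrite -mulmxE.
Qed.

Lemma coreEP_solutionP_outer X :
  X = Y * V <-> A * X = V /\ A * (X * X) = X.
Proof.
split=> [-> | [AX AXX]].
  split; first exact: coreEP_solution.
  have [M YV] := coreEP_solution_range.
  by rewrite mulrA coreEP_solution {1}YV mulrA V_Ak -YV.
have [M VM] := rangeV.
have rangeX : exists M', X = A ^+ k * M'.
  by exists (M * X); rewrite -[LHS]AXX mulrA AX VM mulrA.
exact: coreEP_solution_unique rangeX AX.
Qed.

End CoreEPInverse.

Theorem corollary4p13 (C : numClosedFieldType) (n : nat) (A X Y Z : 'M[C]_n)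
    (k m : nat) :
  mx_index A k -> (0 < m)%N ->
  is_coreEP A Y -> is_MP (A ^+ m) Z ->
  [/\ (X = Y ^+ m.+1 *m A ^+ m *m (A ^+ m *m Z) <->
         (A *m X = Y ^+ m *m A ^+ m *m (A ^+ m *m Z) /\ colspace_eq X (A ^+ k))),
      (A *m X = Y ^+ m *m A ^+ m *m (A ^+ m *m Z) /\ colspace_eq X (A ^+ k)) <->
         (A *m X = Y ^+ m *m A ^+ m *m (A ^+ m *m Z) /\ A *m (X *m X) = X)
    & (X = Y ^+ m.+1 *m A ^+ m *m (A ^+ m *m Z)) <->
         (A *m X = Y ^+ m *m A ^+ m *m (A ^+ m *m Z) /\ A *m (X *m X) = X)].
Proof.
move=> indexA m_gt0 [k' [indexA' [YAY _ rangeY]]] [PAm _ _ _].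
rewrite (mx_index_uniq indexA' indexA) in rangeY.
rewrite !mulmxE in YAY PAm *.
set P := A ^+ m * Z in PAm *.
have P_Ak : P * A ^+ k = A ^+ k.
  by have [U ->] := mx_index_pow_factor m indexA; rewrite mulrA PAm.
have rangeV : exists M, Y ^+ m * A ^+ m * P = A ^+ k * M.
  case/colspace_eqP: rangeY => [[M0 YM0] _].
  exists (M0 * Y ^+ m.-1 * A ^+ m * P).
  by rewrite -{1}(prednK m_gt0) exprS {1}YM0 mulmxE !mulrA.
have V_Ak : Y ^+ m * A ^+ m * P * A ^+ k = A ^+ k.
  by rewrite -mulrA P_Ak -mulrA -exprD coreEP_expK.
have -> : Y ^+ m.+1 * A ^+ m * P = Y * (Y ^+ m * A ^+ m * P).
  by rewrite exprS !mulrA.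
have colsp := coreEP_solutionP_colspace indexA YAY rangeY rangeV V_Ak X.
have outer := coreEP_solutionP_outer indexA YAY rangeY rangeV V_Ak X.
by split; [exact: colsp | exact: iff_trans (iff_sym colsp) outer | exact: outer].
Qed.
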